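(* Let $f$ be a finite sequence of positive integers. The following are equivalent: (1) $f$ is the face vector of a flag complex; (2) $f$ is the $h$-vector (with trailing zeros removed) of $\mathrm{Ind}(G^\pi)$ for some non-empty graph $G$ and some clique vertex-partition $\pi$ of $G$; (3) $f$ is the $h$-vector (with trailing zeros removed) of $\mathrm{Ind}(G^\tau)$ for some non-empty graph $G$, where $\tau$ is the trivial partition of $G$ (i.e. $G^\tau$ is the fully-whiskered graph).
   Context: A flag complex is a simplicial complex whose Stanley–Reisner ideal is generated by quadratic monomials, equivalently one of the form $\mathrm{Ind}(G)$, the complex of independent sets of a graph $G$. A clique vertex-partition of $G=(V,E)$ is a set $\pi=\{W_1,\ldots,W_t\}$ of pairwise disjoint (possibly empty) cliques of $G$ whose union is $V$; $G^\pi$ is the graph with vertex set $V\cup\{w_1,\ldots,w_t\}$ ($w_i$ new) and edge set $E\cup\{vw_i : v\in W_i\}$. The trivial partition of $G$ with $V=\{v_1,\ldots,v_n\}$ is $\tau=\{\{v_1\},\ldots,\{v_n\}\}$, so $G^\tau$ attaches a new degree-one vertex to each vertex of $G$. For a $(d-1)$-dimensional complex, the face vector is $(f_{-1},\ldots,f_{d-1})$, $f_i$ = number of faces with $i+1$ elements, and the $h$-vector is $(h_0,\ldots,h_d)$, $h_j=\sum_{i=0}^{j}(-1)^{j-i}\binom{d-i}{j-i}f_{i-1}$. *)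

From HB Require Import structures.
From mathcomp Require Import all_boot all_order all_algebra.
Set Implicit Arguments. Unset Strict Implicit. Unset Printing Implicit Defensive.
Import GRing.Theory Num.Theory.

Definition is_graph (V : finType) (adj : rel V) : Prop :=
  symmetric adj /\ irreflexive adj.

Definition indep (V : finType) (adj : rel V) (A : {set V}) : bool :=
  [forall x in A, forall y in A, ~~ adj x y].

Definition Ind (V : finType) (adj : rel V) : {set {set V}} :=
  [set A | indep adj A].

(* For a complex D, cdim D = d where D is (d-1)-dimensional (max face size). *)
Definition cdim (V : finType) (D : {set {set V}}) : nat :=
  \max_(A in D) #|A|.

(* Face vector (f_{-1}, ..., f_{d-1}); entry at index k counts faces with k elements. *)
Definition fvec (V : finType) (D : {set {set V}}) : seq nat :=
  [seq #|[set A in D | #|A| == k]| | k <- iota 0 (cdim D).+1].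

(* h-vector (h_0, ..., h_d):
   h_j = sum_{i=0}^j (-1)^(j-i) C(d-i, j-i) f_{i-1}, and f_{i-1} = nth 0 (fvec D) i. *)
Definition hvec (V : finType) (D : {set {set V}}) : seq int :=
  let d := cdim D in
  let f := fvec D in
  [seq (\sum_(i < j.+1)
          (-1) ^+ (j - i) * ('C(d - i, j - i))%:Z * (nth 0%N f i)%:Z)%R
   | j <- iota 0 d.+1].

Definition strip0 (s : seq int) : seq int :=
  let r := rev s in rev (drop (find (fun x => x != 0%R) r) r).

(* Cliques and clique vertex-partitions pi = {W_1, ..., W_t} (indexed by 'I_t;
   blocks pairwise disjoint, possibly empty, pairwise distinct as sets, covering V). *)
Definition is_clique (V : finType) (adj : rel V) (W : {set V}) : Prop :=
  forall x y, x \in W -> y \in W -> x != y -> adj x y.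

Definition clique_vpart (V : finType) (adj : rel V) (t : nat)
    (W : 'I_t -> {set V}) : Prop :=
  [/\ forall i, is_clique adj (W i),
      forall i j, i != j -> [disjoint W i & W j],
      forall i j, W i = W j -> i = j
    & forall v, exists i, v \in W i].

Definition whisker (V : finType) (adj : rel V) (t : nat) (W : 'I_t -> {set V})
    : rel (V + 'I_t)%type :=
  fun x y =>
    match x, y with
    | inl a, inl b => adj a b
    | inl a, inr i => a \in W i
    | inr i, inl a => a \in W i
    | inr _, inr _ => false
    end.

Definition triv_part (V : finType) : 'I_#|V| -> {set V} :=
  fun i => [set enum_val i].

Definition is_flag_fvec (f : seq nat) : Prop :=
  exists (V : finType) (adj : rel V),
    [/\ is_graph adj, 0 < #|V| & fvec (Ind adj) = f].

Definition is_hvec_whisker_part (f : seq nat) : Prop :=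
  exists (V : finType) (adj : rel V) (t : nat) (W : 'I_t -> {set V}),
    [/\ is_graph adj, 0 < #|V|, clique_vpart adj W &
        strip0 (hvec (Ind (whisker adj W))) = map Posz f].

Definition is_hvec_whisker_triv (f : seq nat) : Prop :=
  exists (V : finType) (adj : rel V),
    [/\ is_graph adj, 0 < #|V| &
        strip0 (hvec (Ind (@whisker V adj #|V| (@triv_part V)))) = map Posz f].

(* A face of Ind(G^pi) is S + T with S independent in G and T a set of new
   vertices w_i whose blocks W_i miss S.  Since the blocks are cliques, S meets
   exactly |S| of the t blocks, so Ind(G^pi) has dimension t - 1 and
   \sum_S C(t - |S|, k - |S|) faces of size k.  This is exactly the binomial
   transform inverted by the h-vector formula, hence h_j(Ind(G^pi)) is the
   number of independent j-sets of G: the h-vector of Ind(G^pi) is the face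
   vector of Ind(G) followed by zeros.  All three conditions therefore say that
   f is the face vector of a flag complex, the trivial partition being a
   clique vertex-partition. *)

From HB Require Import structures.
From mathcomp Require Import all_boot all_order all_algebra zify ring.
Set Implicit Arguments. Unset Strict Implicit. Unset Printing Implicit Defensive.
Import GRing.Theory Num.Theory.

Lemma bin_trinomial n m l : l <= m -> m <= n ->
  'C(n, l) * 'C(n - l, m - l) = 'C(n, m) * 'C(m, l).
Proof.
move=> lm mn; apply/eqP.
rewrite -(eqn_pmul2r (_ : 0 < l`! * (m - l)`! * (n - m)`!)); last first.
  by rewrite !muln_gt0 !fact_gt0.
have nlml : n - l - (m - l) = n - m by lia.
have -> : 'C(n, l) * 'C(n - l, m - l) * (l`! * (m - l)`! * (n - m)`!) =
    'C(n, l) * (l`! * ('C(n - l, m - l) * ((m - l)`! * (n - l - (m - l))`!))).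
  by rewrite nlml; ring.
have -> : 'C(n, m) * 'C(m, l) * (l`! * (m - l)`! * (n - m)`!) =
    'C(n, m) * ('C(m, l) * (l`! * (m - l)`!) * (n - m)`!) by ring.
by rewrite !bin_fact ?leq_sub2r //; apply: leq_trans mn.
Qed.

Lemma alternating_bin_sum m :
  (\sum_(l < m.+1) (-1) ^+ (m - l) * 'C(m, l)%:Z = (m == 0)%:Z)%R.
Proof.
have := exprDn (-1 : int) 1 m; rewrite addNr expr0n natz => ->.
by apply: eq_bigr => i _; rewrite expr1n mulr1 -mulr_natr natz.
Qed.

(* The inner sum of the composite of the binomial transform
   f_i = \sum_s C(t - s, i - s) g_s with its inverse
   h_j = \sum_i (-1)^(j - i) C(t - i, j - i) f_i. *)
Lemma binomial_inversion_coef t s j : s <= t -> j <= t ->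
  (\sum_(i < j.+1) (-1) ^+ (j - i) * 'C(t - i, j - i)%:Z
                   * ((s <= i) * 'C(t - s, i - s))%:Z = (s == j)%:Z)%R.
Proof.
move=> st jt; have [js | sj] := ltnP j s.
  rewrite big1 ?gtn_eqF // => i _.
  by rewrite leqNgt (leq_trans _ js) ?ltn_ord // mul0n mulr0.
pose F i := ((-1) ^+ (j - i) * 'C(t - i, j - i)%:Z
             * ((s <= i) * 'C(t - s, i - s))%:Z : int)%R.
rewrite -(big_mkord xpredT F) (big_cat_nat (leq0n s)) ?leqW //=.
rewrite big_nat_cond big1 ?add0r => [|i /andP[/andP[_ lt_is] _]]; last first.
  by rewrite /F leqNgt lt_is mul0n mulr0.
rewrite -{1}(add0n s) big_addn subSn // big_mkord.
rewrite (eq_bigr (fun i : 'I_(j - s).+1 => 'C(t - s, j - s)%:Z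
                   * ((-1) ^+ (j - s - i) * 'C(j - s, i)%:Z))%R) => [|i _].
  rewrite -big_distrr /= alternating_bin_sum.
  have [<-|ne_sj] := eqVneq s j; first by rewrite subnn bin0 mulr1.
  by rewrite subn_eq0 leqNgt ltn_neqAle ne_sj sj mulr0.
have le_ijs : i <= j - s by rewrite -ltnS.
rewrite /F leq_addl mul1n addnK.
have -> : j - (i + s) = j - s - i by lia.
have -> : t - (i + s) = t - s - i by lia.
rewrite -mulrA -PoszM [X in Posz X]mulnC.
by rewrite bin_trinomial ?leq_sub2r // PoszM mulrCA.
Qed.

Lemma Posz_sum (I : Type) (r : seq I) (P : pred I) (F : I -> nat) :
  Posz (\sum_(i <- r | P i) F i) = (\sum_(i <- r | P i) Posz (F i))%R.
Proof. exact: (big_morph Posz PoszD). Qed.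

Section SumSets.
Variables (V I : finType).

Definition lset (A : {set V + I}) : {set V} := [set v | inl v \in A].
Definition rset (A : {set V + I}) : {set I} := [set i | inr i \in A].
Definition sumset (S : {set V}) (T : {set I}) : {set V + I} :=
  inl @: S :|: inr @: T.

Lemma mem_sumsetl S T v : (inl v \in sumset S T) = (v \in S).
Proof.
rewrite inE mem_imset; last by move=> ? ? [].
by case: imsetP => [[]|]; rewrite ?orbF.
Qed.

Lemma mem_sumsetr S T i : (inr i \in sumset S T) = (i \in T).
Proof.
rewrite inE mem_imset; last by move=> ? ? [].
by case: imsetP => [[]|].
Qed.

Lemma sumsetK A : sumset (lset A) (rset A) = A.
Proof. by apply/setP => -[v|i]; rewrite ?mem_sumsetl ?mem_sumsetr inE. Qed.

Lemma lset_sumset S T : lset (sumset S T) = S.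
Proof. by apply/setP => v; rewrite inE mem_sumsetl. Qed.

Lemma rset_sumset S T : rset (sumset S T) = T.
Proof. by apply/setP => i; rewrite inE mem_sumsetr. Qed.

Lemma card_sumset S T : #|sumset S T| = #|S| + #|T|.
Proof.
rewrite cardsU !card_imset; try by move=> ? ? [].
suff -> : inl @: S :&: inr @: T = set0 by rewrite cards0 subn0.
apply/setP => x; rewrite !inE.
by apply/negP => /andP[/imsetP[a _ ->] /imsetP[]].
Qed.

End SumSets.

Section FaceCounts.
Variable V : finType.

Definition nfaces (D : {set {set V}}) (k : nat) : nat :=
  #|[set A in D | #|A| == k]|.

Lemma nth_fvec D i : i <= cdim D -> nth 0 (fvec D) i = nfaces D i.
Proof. by move=> le_i; rewrite /fvec (nth_map 0) ?size_iota ?nth_iota. Qed.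

Lemma nfaces_eq0 D k : cdim D < k -> nfaces D k = 0.
Proof.
move=> lt_dk; apply: eq_card0 => A; rewrite !inE.
apply/andP => -[AD /eqP cardA]; move: lt_dk; rewrite -cardA ltnNge.
by rewrite (leq_bigmax_cond (F := fun A : {set V} => #|A|)).
Qed.

Lemma map_nfaces_iota D n : cdim D <= n ->
  [seq Posz (nfaces D j) | j <- iota 0 n.+1] =
  map Posz (fvec D) ++ nseq (n - cdim D) 0%R.
Proof.
move=> le_dn.
rewrite -(subnKC le_dn) -addSn iotaD map_cat /fvec -map_comp addKn.
congr (_ ++ _); rewrite -[in RHS](size_iota (cdim D).+1 (n - cdim D)).
apply/(@eq_from_nth _ 0%R); rewrite size_map ?size_nseq // size_iota => i lt_i.
by rewrite (nth_map 0) ?size_iota // nth_nseq lt_i nth_iota ?nfaces_eq0 //; lia.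
Qed.

End FaceCounts.

Lemma strip0_cat_nseq0 (s : seq nat) k : all (fun x => 0 < x) s ->
  strip0 (map Posz s ++ nseq k 0%R) = map Posz s.
Proof.
move=> s_gt0; rewrite /strip0 rev_cat find_cat rev_nseq.
have -> : has (fun y : int => y != 0%R) (nseq k 0%R) = false.
  by elim: k => //= k ->; rewrite eqxx.
rewrite size_nseq drop_size_cat ?size_nseq; last first.
  case/lastP: s s_gt0 => [|s x]; first by rewrite addn0.
  by rewrite map_rcons rev_rcons all_rcons /= => /andP[/lt0n_neq0 x_neq0 _];
     rewrite eqz_nat x_neq0 addn0.
by rewrite revK.
Qed.

Section IndependentSets.
Variables (V : finType) (adj : rel V).

Lemma indepP (A : {set V}) :
  reflect {in A &, forall x y, ~~ adj x y} (indep adj A).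
Proof.
apply: (iffP forallP) => [H x y xA yA | H x].
  by move: (H x); rewrite xA => /forallP/(_ y); rewrite yA.
by apply/implyP => xA; apply/forallP => y; apply/implyP; apply: H.
Qed.

Lemma indep_set0 : indep adj set0.
Proof. by apply/indepP => x; rewrite inE. Qed.

Lemma indep_subset (A B : {set V}) : A \subset B -> indep adj B -> indep adj A.
Proof.
move=> /subsetP sAB /indepP indepB.
by apply/indepP => x y /sAB xB /sAB; apply: indepB.
Qed.

Lemma nfaces_Ind_gt0 k : k <= cdim (Ind adj) -> 0 < nfaces (Ind adj) k.
Proof.
rewrite /cdim.
have [|S IndS ->] := eq_bigmax_cond (fun A : {set V} => #|A|) (_ : 0 < #|Ind adj|).
  by apply/card_gt0P; exists set0; rewrite inE indep_set0.
rewrite -bin_gt0 -cards_draws card_gt0 => /set0Pn[B /[!inE] /andP[sBS cardB]].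
apply/card_gt0P; exists B; rewrite !inE cardB andbT.
by apply: indep_subset sBS _; rewrite inE in IndS.
Qed.

End IndependentSets.

Section Whiskers.
Variables (V : finType) (adj : rel V) (t : nat) (W : 'I_t -> {set V}).

Definition hit_blocks (S : {set V}) : {set 'I_t} :=
  [set i | [exists v in S, v \in W i]].

Lemma indep_whisker_sumset S T :
  indep (whisker adj W) (sumset S T) =
  indep adj S && [disjoint T & hit_blocks S].
Proof.
apply/indepP/andP => [H | [/indepP indepS /pred0P TnS]].
  split.
    by apply/indepP => x y xS yS; apply: (H (inl x) (inl y)); rewrite mem_sumsetl.
  apply/pred0P => i /=; apply/negbTE/negP => /andP[iT].
  rewrite inE => /existsP[v /andP[vS vi]].
  move: (H (inl v) (inr i)).
  by rewrite !(mem_sumsetl, mem_sumsetr) /= vi => /(_ vS iT).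
have W_miss v i : v \in S -> i \in T -> v \notin W i.
  move=> vS iT; apply/negP => vi; move: (TnS i); rewrite /= iT inE.
  by move/negbT/existsPn/(_ v); rewrite vS vi.
move=> [x|i] [y|j]; rewrite ?(mem_sumsetl, mem_sumsetr) //=.
- exact: indepS.
- exact: W_miss.
- by move=> iT yS; apply: W_miss.
Qed.

Hypothesis W_part : clique_vpart adj W.

(* Each vertex lies in exactly one block, and two vertices of an independent
   set never share a block since blocks are cliques. *)
Lemma card_hit_blocks S : indep adj S -> #|hit_blocks S| = #|S|.
Proof.
case: W_part => W_clique W_disj _ W_cover /indepP indepS.
pose blk v := xchoose (W_cover v).
have blkP v : v \in W (blk v) := xchooseP (W_cover v).
have blk_uniq v i : v \in W i -> i = blk v.
  move=> vi; apply/eqP; apply: contraLR vi => /W_disj /disjoint_setI0 /setP /(_ v).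
  by rewrite !inE blkP andbT => ->.
have -> : hit_blocks S = blk @: S.
  apply/setP => i; rewrite inE; apply/existsP/imsetP => -[v].
    by case/andP => vS vi; exists v => //; apply: blk_uniq.
  by move=> vS ->; exists v; rewrite vS blkP.
apply: card_in_imset => u v uS vS blk_uv; apply/eqP/negP => /negP ne_uv.
have/negP := indepS u v uS vS; apply.
by apply: (W_clique (blk u)); rewrite // blk_uv.
Qed.

Lemma card_indep_leq S : indep adj S -> #|S| <= t.
Proof.
move=> indepS; rewrite -(card_hit_blocks indepS).
by apply: leq_trans (max_card _) _; rewrite card_ord.
Qed.

Lemma card_compl_hit_blocks S : indep adj S -> #|~: hit_blocks S| = t - #|S|.
Proof.
move=> indepS; apply/eqP; rewrite -(eqn_add2l #|hit_blocks S|) cardsC card_ord.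
by rewrite card_hit_blocks // subnKC ?card_indep_leq.
Qed.

Lemma nfaces_Ind_whisker k :
  nfaces (Ind (whisker adj W)) k =
  \sum_(S | indep adj S && (#|S| <= k)) 'C(t - #|S|, k - #|S|).
Proof.
rewrite /nfaces -sum1_card.
rewrite (reindex (fun p : {set V} * {set 'I_t} => sumset p.1 p.2)) /=; last first.
  by apply: onW_bij; exists (fun A => (lset A, rset A)) => [[S T]|A];
     rewrite /= ?lset_sumset ?rset_sumset ?sumsetK.
rewrite (eq_bigl (fun p : {set V} * {set 'I_t} => indep adj p.1 &&
          ([disjoint p.2 & hit_blocks p.1] && (#|p.1| + #|p.2| == k)))); last first.
  by case=> S T; rewrite !inE indep_whisker_sumset card_sumset andbA.
rewrite -(pair_big_dep _ (fun (S : {set V}) (T : {set 'I_t}) =>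
  [disjoint T & hit_blocks S] && (#|S| + #|T| == k)) (fun _ _ => 1)) /=.
rewrite big_mkcondr /=; apply: eq_bigr => S indepS; rewrite sum1_card.
case: leqP => [le_Sk | lt_kS].
  rewrite -(card_compl_hit_blocks indepS) -cards_draws; apply: eq_card => T.
  rewrite inE unfold_in /= disjoints_subset.
  by congr (_ && _); apply/eqP/eqP => [<-|->]; rewrite ?addKn ?subnKC.
apply: eq_card0 => T; rewrite !inE; apply/negP => /andP[_ /eqP cardST].
by move: lt_kS; rewrite -cardST ltnNge leq_addr.
Qed.

Lemma cdim_Ind_leq : cdim (Ind adj) <= t.
Proof. by apply/bigmax_leqP => S; rewrite inE; apply: card_indep_leq. Qed.

Lemma cdim_Ind_whisker : cdim (Ind (whisker adj W)) = t.
Proof.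
apply/eqP; rewrite eqn_leq; apply/andP; split.
  apply/bigmax_leqP => A; rewrite inE -(sumsetK A) indep_whisker_sumset.
  rewrite card_sumset => /andP[indepS].
  rewrite disjoints_subset => /subset_leq_card.
  rewrite card_compl_hit_blocks // => le_T.
  by rewrite (leq_trans (leq_add (leqnn _) le_T)) ?subnKC ?card_indep_leq.
have Ind_T : sumset set0 [set: 'I_t] \in Ind (whisker adj W).
  rewrite inE indep_whisker_sumset indep_set0; apply/pred0P => i /=.
  by rewrite in_setT /hit_blocks inE; apply/negbTE/existsPn => v; rewrite in_set0.
have := @leq_bigmax_cond _ _ (fun A : {set V + 'I_t} => #|A|) _ Ind_T.
by rewrite card_sumset cards0 cardsT card_ord.
Qed.

Lemma hvec_Ind_whisker :
  hvec (Ind (whisker adj W)) =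
  [seq Posz (nfaces (Ind adj) j) | j <- iota 0 t.+1].
Proof.
rewrite /hvec cdim_Ind_whisker; apply/eq_in_map => j.
rewrite mem_iota add0n ltnS => /andP[_ le_jt].
rewrite (eq_bigr (fun i : 'I_j.+1 => \sum_(S | indep adj S)
   ((-1) ^+ (j - i) * 'C(t - i, j - i)%:Z
    * ((#|S| <= i) * 'C(t - #|S|, i - #|S|))%:Z))%R) => [|i _]; last first.
  have le_it : i <= t by rewrite (leq_trans _ le_jt) // -ltnS.
  rewrite nth_fvec ?cdim_Ind_whisker // nfaces_Ind_whisker big_mkcondr.
  rewrite Posz_sum mulr_sumr; apply: eq_bigr => S _.
  by case: leqP; rewrite ?mul1n ?mul0n.
rewrite exchange_big (eq_bigr (fun S : {set V} => Posz (#|S| == j)))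
  => [|S indepS]; last first.
  by rewrite binomial_inversion_coef ?card_indep_leq.
rewrite -Posz_sum /nfaces -sum1_card; congr Posz.
rewrite big_mkcond [RHS]big_mkcond; apply: eq_bigr => S _.
by rewrite !inE; case: (indep adj S); case: (_ == _).
Qed.

End Whiskers.

Lemma strip0_hvec_Ind_whisker (V : finType) (adj : rel V) t (W : 'I_t -> {set V}) :
  clique_vpart adj W ->
  strip0 (hvec (Ind (whisker adj W))) = map Posz (fvec (Ind adj)).
Proof.
move=> W_part; rewrite hvec_Ind_whisker //.
rewrite map_nfaces_iota ?(cdim_Ind_leq W_part) //.
rewrite strip0_cat_nseq0 //; apply/allP => n /mapP[k].
by rewrite mem_iota ltnS => /andP[_ le_k] ->; exact: nfaces_Ind_gt0.
Qed.

Lemma triv_part_clique_vpart (V : finType) (adj : rel V) :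
  clique_vpart adj (@triv_part V).
Proof.
split=> [i x y | i j | i j | v]; rewrite /triv_part.
- by rewrite !inE => /eqP -> /eqP -> /eqP.
- move=> ne_ij; rewrite disjoints1 inE.
  by apply: contra ne_ij => /eqP/enum_val_inj ->.
- by move/set1_inj/enum_val_inj.
- by exists (enum_rank v); rewrite enum_rankK inE.
Qed.

Theorem theorem3p6 (f : seq nat) (hpos : all (fun x => 0 < x) f) :
  (is_flag_fvec f <-> is_hvec_whisker_part f) /\
  (is_hvec_whisker_part f <-> is_hvec_whisker_triv f).
Proof.
have Posz_inj : injective (map Posz) by apply: inj_map => m n [].
have part_flag : is_hvec_whisker_part f <-> is_flag_fvec f.
  split=> [[V [adj [t [W [adj_graph V_gt0 W_part hW]]]]]
          | [V [adj [adj_graph V_gt0 fW]]]].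
    exists V, adj; split=> //; apply: Posz_inj.
    by rewrite -hW strip0_hvec_Ind_whisker.
  exists V, adj, #|V|, (@triv_part V); split=> //; first exact: triv_part_clique_vpart.
  by rewrite strip0_hvec_Ind_whisker ?fW //; apply: triv_part_clique_vpart.
have triv_flag : is_hvec_whisker_triv f <-> is_flag_fvec f.
  split=> [[V [adj [adj_graph V_gt0 hW]]] | [V [adj [adj_graph V_gt0 fW]]]].
    exists V, adj; split=> //; apply: Posz_inj.
    by rewrite -hW strip0_hvec_Ind_whisker //; apply: triv_part_clique_vpart.
  exists V, adj; split=> //.
  by rewrite strip0_hvec_Ind_whisker ?fW //; apply: triv_part_clique_vpart.
by split; [apply: iff_sym | apply: iff_trans (iff_sym triv_flag)].
Qed.
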